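(* Let $f$ be an operation of arity $k$ defined by a set $S$ of unconditional standard rules together with an unconditional default rule $r$ of the form $f\,x_1\ldots x_k = t$, where $x_1,\dots,x_k$ are pairwise distinct variables and $t$ is an expression. Let $\mathcal T$ be a minimal definitional tree of $S$, and let $R$ be the replacement of $r$ with respect to $\mathcal T$. Then for every ground $f$-rooted pattern $p$: $p$ is reduced at the root to some $q$ by the default rule $r$ if and only if $p$ is reduced at the root to $q$ by some rule of $R$.
   Context: Programs are constructor-based, typed rewrite systems: symbols are partitioned into operations and constructors, each data type has a finite set of constructors. An $f$-rooted pattern is a linear expression $f\,\overline{t_n}$ ($f$ an operation of arity $n$) where each $t_i$ consists only of variables and constructors; it is ground if it contains no variables. A rule $l = r$ reduces an expression $e$ at the root to $\sigma(r)$ if $e = \sigma(l)$ for a substitution $\sigma$. The default rule $r$ reduces $p$ at the root (to $\sigma(t)$, where $p=\sigma(f\,\overline{x_k})$) exactly when no rule of $S$ matches $p$. A partial definitional tree with $f$-rooted pattern $p$ is either a rule node $rule(p = r)$, an exempt node $exempt(p)$, or a branch node $branch(p, x, \mathcal{T}_1,\dots,\mathcal{T}_k)$ where $x$ is a variable of $p$ (the inductive variable), $\{c_1,\dots,c_k\}$ is the set of all constructors of the type of $x$, $\sigma_i = \{x \mapsto c_i\,\overline{y_{a_i}}\}$ with fresh variables, and each $\mathcal{T}_i$ is a partial definitional tree with pattern $\sigma_i(p)$. A definitional tree of a set of rules of $f$ is a finite partial definitional tree with pattern $f\,\overline{x_n}$ ($x_i$ pairwise distinct) containing all and only those rules (up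 to renaming). It is minimal if below every branch node there is some rule node. Replacement: if $N_1,\dots,N_m$ are the exempt nodes of $\mathcal T$, $f\,\overline{t^i_k}$ the pattern of $N_i$, and $\sigma_i = \{x_1\mapsto t^i_1,\dots,x_k\mapsto t^i_k\}$, the replacement of $r$ is the set of standard rules $\{\sigma_i(f\,\overline{x_k}) = \sigma_i(t) : 1\le i\le m\}$. *)

From Stdlib Require Import List.
Import ListNotations.
Set Implicit Arguments.

Record signature := Signature {
  sort : Type;
  sort_eq_dec : forall s1 s2 : sort, {s1 = s2} + {s1 <> s2};
  con : Type;
  op : Type;
  con_dom : con -> list sort;
  con_rng : con -> sort;
  op_dom : op -> list sort;
  op_rng : op -> sort;
  cons_of : sort -> list con;
  cons_of_spec : forall s c, In c (cons_of s) <-> con_rng c = s;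
  cons_of_nodup : forall s, NoDup (cons_of s)
}.

Arguments con_dom {s0} _.
Arguments con_rng {s0} _.
Arguments op_dom {s0} _.
Arguments op_rng {s0} _.
Arguments cons_of {s0} _.

Section Terms.
Variable Sg : signature.

Definition var := (nat * sort Sg)%type.

Definition var_eq_dec (v w : var) : {v = w} + {v <> w}.
Proof.
  destruct v as [n s], w as [m u].
  destruct (PeanoNat.Nat.eq_dec n m) as [->|H];
    [destruct (sort_eq_dec Sg s u) as [->|H']|].
  - left; reflexivity.
  - right; intros E; inversion E; contradiction.
  - right; intros E; inversion E; contradiction.
Defined.

Inductive term :=
| Var (v : var)
| Con (c : con Sg) (args : list term)
| Op (g : op Sg) (args : list term).

Inductive has_sort : term -> sort Sg -> Prop :=
| hs_var n s : has_sort (Var (n, s)) s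
| hs_con (c : con Sg) args : Forall2 has_sort args (con_dom c) -> has_sort (Con c args) (con_rng c)
| hs_op (g : op Sg) args : Forall2 has_sort args (op_dom g) -> has_sort (Op g args) (op_rng g).

Fixpoint vars (t : term) : list var :=
  match t with
  | Var v => [v]
  | Con _ ts | Op _ ts =>
      (fix go (l : list term) : list var :=
         match l with [] => [] | u :: l' => vars u ++ go l' end) ts
  end.

Fixpoint cterm (t : term) : Prop :=
  match t with
  | Var _ => True
  | Con _ ts =>
      (fix go (l : list term) : Prop :=
         match l with [] => True | u :: l' => cterm u /\ go l' end) ts
  | Op _ _ => False
  end.

Definition subst := var -> term.

Fixpoint apply (s : subst) (t : term) : term :=
  match t with
  | Var v => s v
  | Con c ts => Con c (map (apply s) ts)
  | Op g ts => Op g (map (apply s) ts)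
  end.

Definition linear (t : term) : Prop := NoDup (vars t).
Definition ground (t : term) : Prop := vars t = [].

Definition f_pattern (f : op Sg) (p : term) : Prop :=
  exists ts, p = Op f ts /\ length ts = length (op_dom f)
             /\ Forall cterm ts /\ linear p.

Definition rule := (term * term)%type.

Definition reduces_by (rl : rule) (e q : term) : Prop :=
  exists s : subst, e = apply s (fst rl) /\ q = apply s (snd rl).

Definition matches (l e : term) : Prop := exists s : subst, e = apply s l.

Definition default_reduces (S : rule -> Prop) (f : op Sg) (xs : list var)
  (t : term) (p q : term) : Prop :=
  (~ exists rl, S rl /\ matches (fst rl) p) /\
  reduces_by (Op f (map Var xs), t) p q.

Definition variant (rl rl' : rule) : Prop :=
  exists rho : var -> var,
    (forall v, snd (rho v) = snd v) /\
    (forall v w, rho v = rho w -> v = w) /\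
    fst rl' = apply (fun v => Var (rho v)) (fst rl) /\
    snd rl' = apply (fun v => Var (rho v)) (snd rl).

Definition subst1 (x : var) (u : term) : subst :=
  fun v => if var_eq_dec v x then u else Var v.

Fixpoint subst_list (xs : list var) (ts : list term) : subst :=
  match xs, ts with
  | x :: xs', u :: ts' =>
      fun v => if var_eq_dec v x then u else subst_list xs' ts' v
  | _, _ => Var
  end.

Inductive pdt :=
| PRule (l r : term)
| PExempt (p : term)
| PBranch (p : term) (x : var) (subs : list pdt).

Inductive is_pdt : pdt -> term -> Prop :=
| ip_rule p r : is_pdt (PRule p r) p
| ip_exempt p : is_pdt (PExempt p) p
| ip_branch p x subs :
    In x (vars p) ->
    Forall2 (fun (c : con Sg) T =>
      exists ys : list var,
        map snd ys = con_dom c /\ NoDup ys /\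
        (forall y, In y ys -> ~ In y (vars p)) /\
        is_pdt T (apply (subst1 x (Con c (map Var ys))) p))
      (cons_of (snd x)) subs ->
    is_pdt (PBranch p x subs) p.

Fixpoint rules_of (T : pdt) : list rule :=
  match T with
  | PRule l r => [(l, r)]
  | PExempt _ => []
  | PBranch _ _ subs =>
      (fix go (l : list pdt) : list rule :=
         match l with [] => [] | u :: l' => rules_of u ++ go l' end) subs
  end.

Fixpoint exempts_of (T : pdt) : list term :=
  match T with
  | PRule _ _ => []
  | PExempt p => [p]
  | PBranch _ _ subs =>
      (fix go (l : list pdt) : list term :=
         match l with [] => [] | u :: l' => exempts_of u ++ go l' end) subs
  end.

Fixpoint minimal_pdt (T : pdt) : Prop :=
  match T with
  | PRule _ _ | PExempt _ => True
  | PBranch _ _ subs =>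
      rules_of T <> [] /\
      (fix go (l : list pdt) : Prop :=
         match l with [] => True | u :: l' => minimal_pdt u /\ go l' end) subs
  end.

Definition deftree_of (f : op Sg) (S : rule -> Prop) (T : pdt) : Prop :=
  (exists zs : list var, NoDup zs /\ map snd zs = op_dom f /\
     is_pdt T (Op f (map Var zs))) /\
  (forall rl, In rl (rules_of T) -> exists rl', S rl' /\ variant rl' rl) /\
  (forall rl', S rl' -> exists rl, In rl (rules_of T) /\ variant rl' rl).

Definition replacement (T : pdt) (f : op Sg) (xs : list var) (t : term)
  (rl : rule) : Prop :=
  exists ts, In (Op f ts) (exempts_of T) /\
    rl = (apply (subst_list xs ts) (Op f (map Var xs)),
          apply (subst_list xs ts) t).

End Terms.

From Stdlib Require Import List.
Import ListNotations.

(* The leaf patterns of a definitional tree partition the ground values of its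
   root pattern: every ground instance of the root is matched by some leaf
   (coverage: descend along the constructor of the value at each inductive
   variable), and by at most one leaf (two leaves in different subtrees of a
   branch disagree on the constructor at the inductive variable).  A ground
   [f]-rooted pattern [p] is therefore matched by no rule of [S] (equivalently,
   no rule node of [T]) iff it is matched by an exempt pattern [f ts], and the
   replacement rule for [f ts] rewrites [p] exactly as the default rule does. *)

Lemma map_eq_In {A B} (f g : A -> B) l a : map f l = map g l -> In a l -> f a = g a.
Proof.
  induction l as [|b l IH]; simpl; intros E Ha; [contradiction|].
  injection E as Eb El. destruct Ha as [<-|Ha]; auto.
Qed.

Lemma Forall2_In_l {A B} (R : A -> B -> Prop) l1 l2 a :
  Forall2 R l1 l2 -> In a l1 -> exists b, In b l2 /\ R a b.
Proof.
  induction 1 as [|a' b' l1 l2 Hab _ IH]; simpl; intros Ha; [contradiction|].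
  destruct Ha as [<-|Ha]; [eauto|]. destruct (IH Ha) as (b & ? & ?); eauto.
Qed.

Lemma Forall2_In_combine_r {A B} (R : A -> B -> Prop) l1 l2 b :
  Forall2 R l1 l2 -> In b l2 -> exists a, In (a, b) (combine l1 l2) /\ R a b.
Proof.
  induction 1 as [|a' b' l1 l2 Hab _ IH]; simpl; intros Hb; [contradiction|].
  destruct Hb as [<-|Hb]; [eauto|]. destruct (IH Hb) as (a & ? & ?); eauto.
Qed.

Lemma combine_NoDup_functional {A B} (l1 : list A) (l2 : list B) a b1 b2 :
  NoDup l1 -> In (a, b1) (combine l1 l2) -> In (a, b2) (combine l1 l2) -> b1 = b2.
Proof.
  revert l2; induction l1 as [|x l1 IH]; intros [|y l2] Hnd H1 H2; simpl in *;
    try contradiction.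
  inversion Hnd as [|? ? Hx Hnd']; subst.
  destruct H1 as [E1|H1], H2 as [E2|H2].
  - injection E1 as <- <-; injection E2 as <-; reflexivity.
  - injection E1 as <- <-; apply in_combine_l in H2; contradiction.
  - injection E2 as <- <-; apply in_combine_l in H1; contradiction.
  - eauto.
Qed.

Section Substitutions.
Context {Sg : signature}.

Fixpoint term_nested_ind (P : term Sg -> Prop)
  (HV : forall v, P (Var v))
  (HC : forall c ts, Forall P ts -> P (Con c ts))
  (HO : forall g ts, Forall P ts -> P (Op g ts)) (t : term Sg) : P t :=
  let fix go (l : list (term Sg)) : Forall P l :=
    match l with
    | [] => Forall_nil _
    | u :: l' => Forall_cons _ (term_nested_ind P HV HC HO u) (go l')
    end in
  match t with
  | Var v => HV v
  | Con c ts => HC c ts (go ts)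
  | Op g ts => HO g ts (go ts)
  end.

Fixpoint pdt_nested_ind (P : pdt Sg -> Prop)
  (HR : forall l r, P (PRule l r))
  (HE : forall p, P (PExempt p))
  (HB : forall p x subs, Forall P subs -> P (PBranch p x subs)) (T : pdt Sg) : P T :=
  let fix go (l : list (pdt Sg)) : Forall P l :=
    match l with
    | [] => Forall_nil _
    | u :: l' => Forall_cons _ (pdt_nested_ind P HR HE HB u) (go l')
    end in
  match T with
  | PRule l r => HR l r
  | PExempt p => HE p
  | PBranch p x subs => HB p x subs (go subs)
  end.

Lemma vars_Con (c : con Sg) ts : vars (Con c ts) = flat_map (@vars Sg) ts.
Proof. reflexivity. Qed.

Lemma vars_Op (g : op Sg) ts : vars (Op g ts) = flat_map (@vars Sg) ts.
Proof. reflexivity. Qed.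

Lemma vars_map_Var (ys : list (var Sg)) : flat_map (@vars Sg) (map (@Var Sg) ys) = ys.
Proof. induction ys; simpl; f_equal; auto. Qed.

Lemma apply_Var (u : term Sg) : apply (@Var Sg) u = u.
Proof.
  induction u as [v|c ts IH|g ts IH] using term_nested_ind; simpl; f_equal; auto;
    rewrite Forall_forall in IH; rewrite <- map_id; apply map_ext_in; exact IH.
Qed.

Lemma apply_comp (tau th : subst Sg) u :
  apply tau (apply th u) = apply (fun v => apply tau (th v)) u.
Proof.
  induction u as [v|c ts IH|g ts IH] using term_nested_ind; simpl; f_equal; auto;
    rewrite map_map; apply map_ext_in; rewrite Forall_forall in IH; auto.
Qed.

Lemma apply_ext_vars (s1 s2 : subst Sg) u :
  (forall v, In v (vars u) -> s1 v = s2 v) -> apply s1 u = apply s2 u.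
Proof.
  induction u as [v|c ts IH|g ts IH] using term_nested_ind; intros Hv; simpl.
  - apply Hv; left; reflexivity.
  - f_equal; apply map_ext_in; intros a Ha; rewrite Forall_forall in IH.
    apply IH; auto; intros v Hin; apply Hv; rewrite vars_Con, in_flat_map; eauto.
  - f_equal; apply map_ext_in; intros a Ha; rewrite Forall_forall in IH.
    apply IH; auto; intros v Hin; apply Hv; rewrite vars_Op, in_flat_map; eauto.
Qed.

Lemma apply_eq_vars (s1 s2 : subst Sg) u v :
  In v (vars u) -> apply s1 u = apply s2 u -> s1 v = s2 v.
Proof.
  induction u as [w|c ts IH|g ts IH] using term_nested_ind; cbn [apply]; intros Hin E.
  - destruct Hin as [<-|[]]; exact E.
  - rewrite vars_Con, in_flat_map in Hin; destruct Hin as (a & Ha & Hv).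
    injection E as E; rewrite Forall_forall in IH; eapply IH; eauto using map_eq_In.
  - rewrite vars_Op, in_flat_map in Hin; destruct Hin as (a & Ha & Hv).
    injection E as E; rewrite Forall_forall in IH; eapply IH; eauto using map_eq_In.
Qed.

Lemma vars_apply (th : subst Sg) u v :
  In v (vars (apply th u)) -> exists w, In w (vars u) /\ In v (vars (th w)).
Proof.
  induction u as [w|c ts IH|g ts IH] using term_nested_ind; cbn [apply]; intros Hin.
  - exists w; simpl; auto.
  - rewrite vars_Con, in_flat_map in Hin; destruct Hin as (a & Ha & Hv).
    apply in_map_iff in Ha; destruct Ha as (b & <- & Hb).
    rewrite Forall_forall in IH; destruct (IH b Hb Hv) as (w & Hw & Hvw).
    exists w; split; auto; rewrite vars_Con, in_flat_map; eauto.
  - rewrite vars_Op, in_flat_map in Hin; destruct Hin as (a & Ha & Hv).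
    apply in_map_iff in Ha; destruct Ha as (b & <- & Hb).
    rewrite Forall_forall in IH; destruct (IH b Hb Hv) as (w & Hw & Hvw).
    exists w; split; auto; rewrite vars_Op, in_flat_map; eauto.
Qed.

Lemma map_subst_list (xs : list (var Sg)) ts :
  NoDup xs -> length xs = length ts -> map (subst_list xs ts) xs = ts.
Proof.
  revert ts; induction xs as [|x xs IH]; intros [|u ts] Hnd Hlen; simpl in *;
    try discriminate; auto.
  inversion Hnd as [|? ? Hx Hnd']; subst.
  destruct (var_eq_dec x x) as [_|]; [|congruence]. f_equal.
  transitivity (map (subst_list xs ts) xs); [|apply IH; auto].
  apply map_ext_in; intros a Ha.
  destruct (var_eq_dec a x); [subst; contradiction|reflexivity].
Qed.

Lemma apply_subst_list_Op (g : op Sg) (xs : list (var Sg)) ts :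
  NoDup xs -> length xs = length ts ->
  apply (subst_list xs ts) (Op g (map (@Var Sg) xs)) = Op g ts.
Proof. intros. simpl. rewrite map_map. f_equal. apply map_subst_list; auto. Qed.

Lemma subst_list_Forall2 (Q : term Sg -> sort Sg -> Prop) (ys : list (var Sg)) ts v :
  Forall2 Q ts (map snd ys) -> In v ys -> Q (subst_list ys ts v) (snd v).
Proof.
  revert ts; induction ys as [|y ys IH]; intros [|a ts] HQ Hv; simpl in *;
    inversion HQ; subst; try contradiction.
  destruct (var_eq_dec v y) as [->|Hne]; auto.
  destruct Hv as [->|Hv]; [congruence|auto].
Qed.

Lemma apply_subst_list_factor (g : op Sg) (xs : list (var Sg)) ts (s tau : subst Sg) u :
  NoDup xs -> length xs = length ts ->
  apply s (Op g (map (@Var Sg) xs)) = apply tau (Op g ts) ->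
  (forall v, In v (vars u) -> In v xs) ->
  apply s u = apply tau (apply (subst_list xs ts) u).
Proof.
  intros Hnd Hlen E Hu. rewrite apply_comp. apply apply_ext_vars; intros v Hv.
  apply (apply_eq_vars s (fun w => apply tau (subst_list xs ts w)) (Op g (map (@Var Sg) xs))).
  - rewrite vars_Op, vars_map_Var; auto.
  - rewrite <- apply_comp, apply_subst_list_Op; auto.
Qed.

Lemma matches_instance (th : subst Sg) l p : matches (apply th l) p -> matches l p.
Proof. intros [s ->]. exists (fun v => apply s (th v)). apply apply_comp. Qed.

(* The inverse of an injective renaming is only needed on the finitely many
   variables of [l], where it can be computed by search. *)
Lemma matches_renaming (rho : var Sg -> var Sg) l p :
  (forall v w, rho v = rho w -> v = w) ->
  matches l p -> matches (apply (fun v => Var (rho v)) l) p.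
Proof.
  intros Hinj [s ->].
  set (is_rho_of w v := if var_eq_dec (rho v) w then true else false).
  exists (fun w => match find (is_rho_of w) (vars l) with
                   | Some v => s v
                   | None => Var w
                   end).
  rewrite apply_comp; apply apply_ext_vars; intros v Hv; simpl.
  destruct (find (is_rho_of (rho v)) (vars l)) as [v'|] eqn:Hfind.
  - apply find_some in Hfind as [_ Hv'].
    unfold is_rho_of in Hv'; destruct var_eq_dec as [E|]; [|discriminate].
    rewrite (Hinj _ _ E); reflexivity.
  - apply (find_none _ _ Hfind) in Hv.
    unfold is_rho_of in Hv; destruct var_eq_dec; [discriminate|congruence].
Qed.

Lemma variant_matches (rl rl' : rule Sg) p :
  variant rl rl' -> matches (fst rl) p <-> matches (fst rl') p.
Proof.
  intros (rho & _ & Hinj & Hl & _). rewrite Hl. split.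
  - apply matches_renaming; auto.
  - apply matches_instance.
Qed.

Lemma reduces_by_instance (th : subst Sg) l r p q :
  reduces_by (apply th l, apply th r) p q -> reduces_by (l, r) p q.
Proof.
  intros [s [Hp Hq]]; exists (fun v => apply s (th v)); cbn [fst snd] in *.
  rewrite <- !apply_comp; auto.
Qed.

Lemma reduces_by_subst_list (g : op Sg) (xs : list (var Sg)) ts t p q :
  NoDup xs -> length xs = length ts -> (forall v, In v (vars t) -> In v xs) ->
  matches (Op g ts) p -> reduces_by (Op g (map (@Var Sg) xs), t) p q ->
  reduces_by (Op g ts, apply (subst_list xs ts) t) p q.
Proof.
  intros Hnd Hlen Ht [tau Htau] [s [Hp Hq]]; cbn [fst snd] in *.
  exists tau; split; [exact Htau|].
  rewrite Hq; apply apply_subst_list_factor with (g := g); auto; congruence.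
Qed.

End Substitutions.

Section Values.
Context {Sg : signature}.

Definition value (u : term Sg) (s : sort Sg) : Prop :=
  cterm u /\ ground u /\ has_sort u s.

Lemma cterm_Con_args (c : con Sg) ts : cterm (Con c ts) -> Forall (@cterm Sg) ts.
Proof. induction ts; simpl; intros; [|destruct H]; auto. Qed.

Lemma values_of_args (ts : list (term Sg)) ss :
  Forall (@cterm Sg) ts -> flat_map (@vars Sg) ts = [] -> Forall2 (@has_sort Sg) ts ss ->
  Forall2 value ts ss.
Proof.
  intros Hc Hg Hs; induction Hs as [|u s ts ss Hu _ IH]; constructor.
  - inversion Hc; simpl in Hg; apply app_eq_nil in Hg as [? _].
    repeat split; auto.
  - inversion Hc; simpl in Hg; apply app_eq_nil in Hg as [_ ?]; auto.
Qed.

Lemma value_Con (c : con Sg) ts s :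
  value (Con c ts) s -> con_rng c = s /\ Forall2 value ts (con_dom c).
Proof.
  intros (Hc & Hg & Hs). inversion Hs as [|? ? Hargs|]; subst.
  split; [reflexivity|].
  apply values_of_args; [exact (cterm_Con_args _ _ Hc)|exact Hg|exact Hargs].
Qed.

Lemma ground_f_pattern_values (f : op Sg) p :
  f_pattern f p -> ground p -> has_sort p (op_rng f) ->
  exists ts, p = Op f ts /\ Forall2 value ts (op_dom f).
Proof.
  intros (ts & -> & _ & Hc & _) Hg Hs. inversion Hs; subst.
  exists ts; split; [reflexivity|apply values_of_args; auto].
Qed.

End Values.

Section DefinitionalTrees.
Context {Sg : signature}.

Lemma rules_of_PBranch (p : term Sg) x subs :
  rules_of (PBranch p x subs) = flat_map (@rules_of Sg) subs.
Proof. induction subs; simpl in *; congruence. Qed.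

Lemma exempts_of_PBranch (p : term Sg) x subs :
  exempts_of (PBranch p x subs) = flat_map (@exempts_of Sg) subs.
Proof. induction subs; simpl in *; congruence. Qed.

Lemma is_pdt_leaf_instances (T : pdt Sg) P :
  is_pdt T P ->
  (forall l r, In (l, r) (rules_of T) -> exists th, l = apply th P) /\
  (forall E, In E (exempts_of T) -> exists th, E = apply th P).
Proof.
  revert P; induction T as [l0 r0|p0|p0 x subs IH] using pdt_nested_ind;
    intros P HP; inversion HP as [| | ? ? ? Hx Hsubs]; subst.
  - split; intros * Hin; simpl in Hin; [|contradiction].
    destruct Hin as [[= -> ->]|[]]. exists (@Var Sg); symmetry; apply apply_Var.
  - split; intros * Hin; simpl in Hin; [contradiction|].
    destruct Hin as [->|[]]. exists (@Var Sg); symmetry; apply apply_Var.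
  - rewrite rules_of_PBranch, exempts_of_PBranch, Forall_forall in *.
    split; intros * Hin; apply in_flat_map in Hin as (T' & HT' & Hin);
      destruct (Forall2_In_combine_r _ _ _ _ Hsubs HT') as (c & _ & ys & _ & _ & _ & Hp);
      [destruct (proj1 (IH T' HT' _ Hp) _ _ Hin) as [th ->]
      |destruct (proj2 (IH T' HT' _ Hp) _ Hin) as [th ->]];
      eexists; apply apply_comp.
Qed.

(* Refinement of a substitution at a branch node: the value [c args] at the
   inductive variable [x] is spread over the fresh variables [ys]. *)
Definition subst_update (ys : list (var Sg)) (args : list (term Sg)) (sg : subst Sg) : subst Sg :=
  fun v => if in_dec (@var_eq_dec Sg) v ys then subst_list ys args v else sg v.

Section Refinement.
Variables (P : term Sg) (x : var Sg) (c : con Sg) (ys : list (var Sg))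
  (args : list (term Sg)) (sg : subst Sg).
Hypothesis fresh_ys : forall y, In y ys -> ~ In y (vars P).

Lemma apply_subst_update :
  sg x = Con c args -> NoDup ys -> length ys = length args ->
  apply (subst_update ys args sg) (apply (subst1 x (Con c (map (@Var Sg) ys))) P)
  = apply sg P.
Proof.
  intros Hx Hnd Hlen. rewrite apply_comp. apply apply_ext_vars; intros w Hw.
  unfold subst1; destruct (var_eq_dec w x) as [->|Hne]; simpl.
  - rewrite Hx, map_map. f_equal.
    transitivity (map (subst_list ys args) ys); [|apply map_subst_list; auto].
    apply map_ext_in; intros a Ha; simpl. unfold subst_update.
    destruct in_dec; [reflexivity|contradiction].
  - unfold subst_update; destruct in_dec as [Hy|]; [|reflexivity].
    exfalso; exact (fresh_ys _ Hy Hw).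
Qed.

Lemma subst_update_values :
  (forall v, In v (vars P) -> value (sg v) (snd v)) ->
  Forall2 value args (map snd ys) ->
  forall v, In v (vars (apply (subst1 x (Con c (map (@Var Sg) ys))) P)) ->
  value (subst_update ys args sg v) (snd v).
Proof.
  intros Hsg Hargs v Hv. apply vars_apply in Hv as (w & Hw & Hvw).
  unfold subst1 in Hvw; unfold subst_update.
  destruct (var_eq_dec w x) as [->|Hne].
  - rewrite vars_Con, vars_map_Var in Hvw.
    destruct in_dec; [|contradiction]. apply (subst_list_Forall2 value); auto.
  - destruct Hvw as [<-|[]]. destruct in_dec as [Hy|]; auto.
    exfalso; exact (fresh_ys _ Hy Hw).
Qed.

End Refinement.

Lemma is_pdt_covers_values (T : pdt Sg) P (sg : subst Sg) :
  is_pdt T P ->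
  (forall v, In v (vars P) -> value (sg v) (snd v)) ->
  (exists l r, In (l, r) (rules_of T) /\ matches l (apply sg P)) \/
  (exists E, In E (exempts_of T) /\ matches E (apply sg P)).
Proof.
  revert P sg; induction T as [l0 r0|p0|p0 x subs IH] using pdt_nested_ind;
    intros P sg HP Hsg; inversion HP as [| | ? ? ? Hx Hsubs]; subst.
  - left; exists P, r0; split; [left; reflexivity|exists sg; reflexivity].
  - right; exists P; split; [left; reflexivity|exists sg; reflexivity].
  - rewrite rules_of_PBranch, exempts_of_PBranch. rewrite Forall_forall in IH.
    pose proof (Hsg x Hx) as Hvx.
    destruct (sg x) as [|c args|] eqn:Ex; [discriminate (proj1 (proj2 Hvx))| |destruct Hvx as [[] _]].
    apply value_Con in Hvx as [Hc Hargs].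
    assert (Hin : In c (cons_of (snd x))) by (apply cons_of_spec; auto).
    destruct (Forall2_In_l _ _ _ _ Hsubs Hin) as (T' & HT' & ys & Hys & Hnd & Hfresh & Hp).
    rewrite <- Hys in Hargs.
    assert (Hlen : length ys = length args)
      by (apply Forall2_length in Hargs; rewrite length_map in Hargs; auto).
    rewrite <- (apply_subst_update P x c ys args sg Hfresh) by auto.
    destruct (IH T' HT' _ _ Hp (subst_update_values P x c ys args sg Hfresh Hsg Hargs))
      as [(l & r & Hl & Hm)|(E & HE & Hm)].
    + left; exists l, r; split; auto; apply in_flat_map; eauto.
    + right; exists E; split; auto; apply in_flat_map; eauto.
Qed.

Lemma is_pdt_exempt_rule_disjoint (T : pdt Sg) P E l r p :
  is_pdt T P -> In E (exempts_of T) -> In (l, r) (rules_of T) ->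
  matches E p -> matches l p -> False.
Proof.
  revert P; induction T as [l0 r0|p0|p0 x subs IH] using pdt_nested_ind;
    intros P HP HE Hl HmE Hml; inversion HP as [| | ? ? ? Hx Hsubs]; subst.
  - destruct HE.
  - destruct Hl.
  - rewrite rules_of_PBranch in Hl; rewrite exempts_of_PBranch in HE.
    apply in_flat_map in HE as (T1 & HT1 & HE).
    apply in_flat_map in Hl as (T2 & HT2 & Hl).
    destruct (Forall2_In_combine_r _ _ _ _ Hsubs HT1) as (c1 & Hc1 & ys1 & _ & _ & _ & Hp1).
    destruct (Forall2_In_combine_r _ _ _ _ Hsubs HT2) as (c2 & Hc2 & ys2 & _ & _ & _ & Hp2).
    assert (Ec : c1 = c2).
    { destruct (proj2 (is_pdt_leaf_instances _ _ Hp1) _ HE) as [th1 ->].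
      destruct (proj1 (is_pdt_leaf_instances _ _ Hp2) _ _ Hl) as [th2 ->].
      destruct HmE as [s1 Hs1], Hml as [s2 Hs2]. rewrite apply_comp, apply_comp in Hs1, Hs2.
      rewrite Hs1 in Hs2. apply (apply_eq_vars _ _ _ x Hx) in Hs2.
      unfold subst1 in Hs2; destruct (var_eq_dec x x) as [_|]; [|congruence].
      injection Hs2 as Ec _; exact Ec. }
    subst c2.
    assert (T1 = T2) as <- by (eapply combine_NoDup_functional; eauto using cons_of_nodup).
    rewrite Forall_forall in IH. eapply (IH T1); eauto.
Qed.

Lemma is_pdt_root_exempt (f : op Sg) zs T E :
  map snd zs = op_dom f -> is_pdt T (Op f (map (@Var Sg) zs)) -> In E (exempts_of T) ->
  exists ts, E = Op f ts /\ length ts = length (op_dom f).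
Proof.
  intros Hzs HT HE. destruct (proj2 (is_pdt_leaf_instances _ _ HT) _ HE) as [th ->].
  eexists; split; [reflexivity|]. rewrite <- Hzs, !length_map; reflexivity.
Qed.

Lemma is_pdt_root_covers (f : op Sg) zs T p :
  NoDup zs -> map snd zs = op_dom f -> is_pdt T (Op f (map (@Var Sg) zs)) ->
  f_pattern f p -> ground p -> has_sort p (op_rng f) ->
  (exists l r, In (l, r) (rules_of T) /\ matches l p) \/
  (exists E, In E (exempts_of T) /\ matches E p).
Proof.
  intros Hnd Hzs HT Hfp Hgp Hsp.
  destruct (ground_f_pattern_values f p Hfp Hgp Hsp) as (args & -> & Hargs).
  rewrite <- Hzs in Hargs.
  assert (Hlen : length zs = length args)
    by (apply Forall2_length in Hargs; rewrite length_map in Hargs; auto).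
  rewrite <- (apply_subst_list_Op f zs args) by auto.
  apply is_pdt_covers_values; auto.
  intros v Hv; rewrite vars_Op, vars_map_Var in Hv.
  apply (subst_list_Forall2 value); auto.
Qed.

End DefinitionalTrees.

Theorem mainTheorem5 (Sg : signature) (f : op Sg)
  (S : rule Sg -> Prop) (xs : list (var Sg)) (t : term Sg) (T : pdt Sg) :
  (forall rl, S rl -> f_pattern f (fst rl)) ->
  NoDup xs -> map snd xs = op_dom f ->
  has_sort t (op_rng f) ->
  (forall v, In v (vars t) -> In v xs) ->
  deftree_of f S T -> minimal_pdt T ->
  forall p q : term Sg,
    f_pattern f p -> ground p -> has_sort p (op_rng f) ->
    (default_reduces S f xs t p q <->
     exists rl, replacement T f xs t rl /\ reduces_by rl p q).
Proof.
  intros _ Hnd Hxs _ Hvt [(zs & Hznd & Hzs & HT) [Hto_S Hfrom_S]] _ p q Hfp Hgp Hsp.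
  assert (Hexempt : forall E, In E (exempts_of T) ->
                    exists ts, E = Op f ts /\ length xs = length ts).
  { intros E HE. destruct (is_pdt_root_exempt f zs T E Hzs HT HE) as (ts & -> & Hlen).
    exists ts; split; [reflexivity|]. rewrite Hlen, <- Hxs, length_map; reflexivity. }
  split.
  - intros [Hno_S Hred].
    destruct (is_pdt_root_covers f zs T p Hznd Hzs HT Hfp Hgp Hsp)
      as [(l & r & Hl & Hm)|(E & HE & Hm)].
    + exfalso. destruct (Hto_S _ Hl) as (rl & HS & Hvar).
      apply Hno_S; exists rl; split; [exact HS|]. apply (variant_matches _ _ _ Hvar), Hm.
    + destruct (Hexempt E HE) as (ts & -> & Hlen).
      eexists; split; [exists ts; split; [exact HE|reflexivity]|].
      rewrite apply_subst_list_Op by auto. apply reduces_by_subst_list; auto.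
  - intros (rl & (ts & HE & ->) & Hred).
    destruct (Hexempt _ HE) as (ts' & [= <-] & Hlen).
    split; [|exact (reduces_by_instance _ _ _ _ _ Hred)].
    intros (rl' & HS & Hm). destruct (Hfrom_S _ HS) as ([l r] & Hl & Hvar).
    apply (variant_matches _ _ _ Hvar) in Hm.
    apply (is_pdt_exempt_rule_disjoint T _ _ l r p HT HE Hl); [|exact Hm].
    destruct Hred as [tau [Hp _]]; exists tau.
    rewrite Hp; cbn [fst]; rewrite apply_subst_list_Op; auto.
Qed.
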